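(* Let $(X_1,X_2,A)\in\mathbb R\times\mathbb R\times\mathbb R\subset\mathbb C^2\times\mathbb R$ (i.e. $X_1,X_2$ real) satisfy $$-2\,\mathrm{Re}(X_1+X_2)-2\,\mathrm{Re}\bigl(X_1\overline{X}_2e^{-2iA}\bigr)+|X_1|^2+|X_2|^2+1=0$$ and $-\pi/2\le A\le\pi/2$. Then $\mathrm{Re}(X_1e^{-iA})\ge0$. *)

From Stdlib Require Import Reals.
From Coquelicot Require Import Coquelicot.
Open Scope R_scope.

Definition expi (t : R) : C := (cos t, sin t).

(* For real X1, X2 the constraint is a conic in X2 whose coefficients involve
   c = cos(2A); completing the square in X2 shows that the discriminant
   X1 (1 + c) (2 - X1 (1 - c)) is nonnegative.  On [-pi/2, pi/2] we have
   cos A >= 0, and if cos A > 0 then c > -1, which forces X1 >= 0. *)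
From Stdlib Require Import Reals Lra Psatz.
From Coquelicot Require Import Coquelicot.
Open Scope R_scope.

Lemma Re_RtoC_mul_expi (x t : R) : Re (RtoC x * expi t)%C = x * cos t.
Proof. unfold expi, RtoC, Cmult, Re; simpl; ring. Qed.

Lemma Re_RtoC_mul_conj_expi (x y t : R) :
  Re (RtoC x * Cconj (RtoC y) * expi t)%C = x * y * cos t.
Proof. unfold expi, RtoC, Cconj, Cmult, Re; simpl; ring. Qed.

Lemma conic_complete_square (x y c : R) :
  x ^ 2 + y ^ 2 + 1 - 2 * x - 2 * y - 2 * x * y * c
  = (y - (1 + x * c)) ^ 2 - x * (1 + c) * (2 - x * (1 - c)).
Proof. ring. Qed.

Lemma conic_first_coord_nonneg (x y c : R) :
  x ^ 2 + y ^ 2 + 1 - 2 * x - 2 * y - 2 * x * y * c = 0 ->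
  -1 < c <= 1 -> 0 <= x.
Proof.
  rewrite conic_complete_square; intros Hconic [Hc_gt Hc_le].
  destruct (Rle_or_lt 0 x) as [Hx | Hx]; [exact Hx | exfalso].
  assert (Hfactor : 0 < 2 - x * (1 - c)) by nra.
  assert (Hdiscr : x * (1 + c) * (2 - x * (1 - c)) < 0).
  { apply Rmult_neg_pos; [nra | exact Hfactor]. }
  pose proof (pow2_ge_0 (y - (1 + x * c))); lra.
Qed.

Theorem theorem3p4 (X1 X2 A : R) :
  -2 * Re (RtoC X1 + RtoC X2)%C
    - 2 * Re (RtoC X1 * Cconj (RtoC X2) * expi (-2 * A))%C
    + (Cmod (RtoC X1))^2 + (Cmod (RtoC X2))^2 + 1 = 0 ->
  - (PI / 2) <= A <= PI / 2 ->
  0 <= Re (RtoC X1 * expi (- A))%C.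
Proof.
  intros Hconic HA.
  rewrite Re_RtoC_mul_conj_expi, !Cmod_R, !pow2_abs in Hconic.
  rewrite Re_RtoC_mul_expi, cos_neg.
  replace (-2 * A) with (- (2 * A)) in Hconic by ring.
  rewrite cos_neg in Hconic.
  assert (HcosA : 0 <= cos A) by (apply cos_ge_0; lra).
  destruct (Req_dec (cos A) 0) as [Hcos0 | Hcos0].
  { rewrite Hcos0; lra. }
  assert (Hc : -1 < cos (2 * A) <= 1).
  { split; [rewrite cos_2a_cos; nra | apply COS_bound]. }
  apply Rmult_le_pos; [| exact HcosA].
  apply (conic_first_coord_nonneg X1 X2 (cos (2 * A))); [| exact Hc].
  unfold Re, RtoC, Cplus in Hconic; simpl in Hconic; lra.
Qed.
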